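(* For all integers $n,k,s,b$ with $n \geq k \geq s > b \geq 0$, $n > 0$ and $n \geq k+s-b$, there exists an $(n,k,s,b)$-oriented graph.
   Context: An oriented graph is a digraph with no loops and no pair of symmetric arcs. For vertices $u,v$ write $u(1\text{-}0)v$ if there is an arc from $u$ to $v$, and $u(0\text{-}0)v$ if there is no arc between $u$ and $v$. A vertex $v$ is weakly reachable within two steps from $u$ if $u(1\text{-}0)v$, or $u(0\text{-}0)v$, or for some vertex $w$ one has $u(1\text{-}0)w(1\text{-}0)v$, or $u(1\text{-}0)w(0\text{-}0)v$, or $u(0\text{-}0)w(1\text{-}0)v$. A vertex $u$ is a weak king if every other vertex is weakly reachable within two steps from $u$, and a weak serf if $u$ is weakly reachable within two steps from every other vertex. An $(n,k,s,b)$-oriented graph is an oriented graph on $n$ vertices with exactly $k$ weak kings and exactly $s$ weak serfs, such that exactly $b$ of the weak kings are also weak serfs. *)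

From mathcomp Require Import all_boot.
Set Implicit Arguments. Unset Strict Implicit. Unset Printing Implicit Defensive.

Definition oriented (n : nat) (arc : rel 'I_n) : bool :=
  [forall u, ~~ arc u u] && [forall u, forall v, ~~ (arc u v && arc v u)].

Definition arc10 n (arc : rel 'I_n) (u v : 'I_n) : bool := arc u v.
Definition arc00 n (arc : rel 'I_n) (u v : 'I_n) : bool :=
  ~~ arc u v && ~~ arc v u.

Definition wreach2 n (arc : rel 'I_n) (u v : 'I_n) : bool :=
  [|| arc10 arc u v, arc00 arc u v
    | [exists w, [|| arc10 arc u w && arc10 arc w v,
                     arc10 arc u w && arc00 arc w v
                   | arc00 arc u w && arc10 arc w v]]].

Definition weak_king n (arc : rel 'I_n) (u : 'I_n) : bool :=
  [forall v, (v != u) ==> wreach2 arc u v].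

Definition weak_serf n (arc : rel 'I_n) (u : 'I_n) : bool :=
  [forall v, (v != u) ==> wreach2 arc v u].

Definition is_nksb_graph n (arc : rel 'I_n) (k s b : nat) : Prop :=
  [/\ oriented arc,
      #|[set u | weak_king arc u]| = k,
      #|[set u | weak_serf arc u]| = s &
      #|[set u | weak_king arc u && weak_serf arc u]| = b].

(* Vertices [0, b) are isolated, hence both weak kings and weak serfs.  The
   other vertices are layered (see [layer]), with an arc from every vertex to
   every vertex of a higher layer.  A vertex without in-arcs (resp. out-arcs)
   is a weak king (resp. weak serf).  A vertex above the bottom layer is not a
   weak king: it cannot weakly reach the source b, which also points to all of
   its out-neighbours.  Dually, no vertex below the top layer is weakly
   reachable from the sink n - 1.  So the weak kings are [0, k) and the weak
   serfs are [0, b) together with the s - b vertices of the top layer. *)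
From mathcomp Require Import all_boot.
From mathcomp Require Import zify.

Section WeakReachability.
Variables (n : nat) (arc : rel 'I_n).

Lemma wreach2_rev u v : wreach2 [rel x y | arc y x] v u = wreach2 arc u v.
Proof.
rewrite /wreach2 /arc10 /arc00 /=; congr (_ || (_ || _)).
apply: eq_existsb => w.
by case: (arc u w); case: (arc w u); case: (arc v w); case: (arc w v).
Qed.

Lemma weak_serf_rev u : weak_serf arc u = weak_king [rel x y | arc y x] u.
Proof. by apply: eq_forallb => v; rewrite wreach2_rev. Qed.

Lemma wreach2_no_back_arc u v : ~~ arc v u -> wreach2 arc u v.
Proof.
by move=> vu; rewrite /wreach2 /arc10 /arc00 vu andbT; case: (arc u v).
Qed.

Lemma weak_king_source u : (forall v, ~~ arc v u) -> weak_king arc u.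
Proof.
by move=> srcu; apply/forallP => v; rewrite wreach2_no_back_arc ?implybT.
Qed.

Lemma not_weak_king_dominated u x :
    x != u -> arc x u -> (forall w, ~~ arc w x) ->
    (forall w, arc u w -> arc x w) ->
  ~~ weak_king arc u.
Proof.
move=> neq_xu xu srcx domx; apply/forallP => /(_ x); rewrite neq_xu /=.
rewrite /wreach2 /arc10 /arc00 xu (negbTE (srcx _)) /=.
case/existsP => w; rewrite (negbTE (srcx _)) !andbF orbF.
by case/andP => /domx ->.
Qed.

End WeakReachability.

Lemma weak_serf_sink n (arc : rel 'I_n) u :
  (forall v, ~~ arc u v) -> weak_serf arc u.
Proof. by move=> snku; rewrite weak_serf_rev; apply: weak_king_source. Qed.

Lemma not_weak_serf_dominated n (arc : rel 'I_n) u y :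
    y != u -> arc u y -> (forall w, ~~ arc y w) ->
    (forall w, arc w u -> arc w y) ->
  ~~ weak_serf arc u.
Proof. by rewrite weak_serf_rev; apply: not_weak_king_dominated. Qed.

Lemma card_ord_lt n c : c <= n -> #|[set i : 'I_n | i < c]| = c.
Proof.
move=> le_cn; have -> : [set i : 'I_n | i < c] = widen_ord le_cn @: [set: 'I_c].
  apply/setP => i; rewrite inE; apply/idP/imsetP => [lt_ic | [j _ ->]].
    by exists (Ordinal lt_ic); last apply: val_inj.
  exact: (ltn_ord j).
by rewrite card_imset ?cardsT ?card_ord // => i j [] /val_inj.
Qed.

Lemma card_ord_lt_or_ge n b c :
  b <= c -> c <= n -> #|[set i : 'I_n | (i < b) || (c <= i)]| = b + (n - c).
Proof.
move=> le_bc le_cn.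
have -> : [set i : 'I_n | (i < b) || (c <= i)] =
          [set i : 'I_n | i < b] :|: ~: [set i : 'I_n | i < c].
  by apply/setP => i; rewrite !inE -leqNgt.
have disj : [set i : 'I_n | i < b] :&: ~: [set i : 'I_n | i < c] = set0.
  by apply/setP => i; rewrite !inE -leqNgt; lia.
rewrite cardsU disj cards0 subn0 card_ord_lt ?(leq_trans le_bc) //.
by have := cardsC [set i : 'I_n | i < c]; rewrite card_ord card_ord_lt //; lia.
Qed.

Section Construction.
Variables (n k s b : nat).

Let m := n - (k + s - b).

(* Truncated subtraction puts [0, k) in layer 0; vertex k + j is in layer j.+1
   for j < m, and the remaining s - b vertices share the top layer m.+1. *)
Definition layer (i : nat) : nat := minn (i.+1 - k) m.+1.

Definition layered_arc : rel 'I_n :=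
  fun u v => [&& b <= u, b <= v & layer u < layer v].

Lemma layered_arc_oriented : oriented layered_arc.
Proof.
by apply/andP; split; apply/forallP => u; rewrite /layered_arc;
  [lia | apply/forallP => v; lia].
Qed.

Hypotheses (le_sk : s <= k) (le_kn : k <= n) (lt_bs : b < s)
  (le_ksbn : k + s - b <= n).

Lemma weak_king_layered u : weak_king layered_arc u = (u < k).
Proof.
have [lt_uk | le_ku] := ltnP u k.
  by apply: weak_king_source => v; rewrite /layered_arc /layer; lia.
have lt_bn : b < n by lia.
apply/negbTE/(@not_weak_king_dominated _ _ _ (Ordinal lt_bn)) => [|||w];
  by rewrite -?val_eqE /layered_arc /layer /=; lia.
Qed.

Lemma weak_serf_layered u :
  weak_serf layered_arc u = (u < b) || (k + m <= u).
Proof.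
have [top_u | not_top_u] := boolP ((u < b) || (k + m <= u)).
  by apply: weak_serf_sink => v; rewrite /layered_arc /layer; lia.
have lt_pn : n.-1 < n by lia.
apply/negbTE/(@not_weak_serf_dominated _ _ _ (Ordinal lt_pn)) => [|||w];
  by rewrite -?val_eqE /layered_arc /layer /=; lia.
Qed.

Lemma layered_arc_nksb : is_nksb_graph layered_arc k s b.
Proof.
split; first exact: layered_arc_oriented.
- have -> : [set u | weak_king layered_arc u] = [set u : 'I_n | u < k].
    by apply/setP => u; rewrite !inE weak_king_layered.
  exact: card_ord_lt.
- have -> : [set u | weak_serf layered_arc u] =
            [set u : 'I_n | (u < b) || (k + m <= u)].
    by apply/setP => u; rewrite !inE weak_serf_layered.
  rewrite card_ord_lt_or_ge /m; lia.
- have -> : [set u | weak_king layered_arc u && weak_serf layered_arc u] =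
            [set u : 'I_n | u < b].
    apply/setP => u.
    by rewrite !inE weak_king_layered weak_serf_layered /m; lia.
  rewrite card_ord_lt; lia.
Qed.

End Construction.

Theorem theorem9 (n k s b : nat) :
  s <= k -> k <= n -> b < s -> 0 < n -> k + s - b <= n ->
  exists arc : rel 'I_n, is_nksb_graph arc k s b.
Proof.
move=> le_sk le_kn lt_bs _ le_ksbn.
by exists (layered_arc n k s b); apply: layered_arc_nksb.
Qed.
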